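(* Let $(M,\Sigma)$ be a measurable space, $r\ge1$, and $\mu_1,\dots,\mu_r$ non-atomic countably additive finite (nonnegative) measures on $\Sigma$. Then for every measurable set $S$ and every index $k\in\{1,\dots,r\}$ there is a measurable subset $H\subseteq S$ with $\mu_k(H)\ge 2^{-(r-1)}\mu_k(S)$ on which there exists a strong solution, i.e. a partition $H=F_1\sqcup\dots\sqcup F_r$ into measurable sets with $\mu_i(F_i)\ge\mu_i(F_j)$ for all $i,j$.
   Context: Partition elements may be empty. A measure is non-atomic if every measurable set of positive measure contains a measurable subset of strictly smaller positive measure. *)

From HB Require Import structures.
From mathcomp Require Import all_boot all_order all_algebra.
From mathcomp Require Import all_classical all_reals all_analysis.
Set Implicit Arguments. Unset Strict Implicit. Unset Printing Implicit Defensive.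
Import Order.TTheory GRing.Theory Num.Theory.
Local Open Scope classical_set_scope.
Local Open Scope ring_scope.
Local Open Scope ereal_scope.

Definition non_atomic d (T : measurableType d) (R : realType)
  (mu : set T -> \bar R) : Prop :=
  forall A : set T, measurable A -> 0 < mu A ->
    exists B : set T, [/\ measurable B, B `<=` A, 0 < mu B & mu B < mu A].

Definition strong_solution d (T : measurableType d) (R : realType) (r : nat)
  (mu : 'I_r -> set T -> \bar R) (H : set T) : Prop :=
  exists F : 'I_r -> set T,
    [/\ (forall i, measurable (F i)),
        H = \bigcup_(i in [set: 'I_r]) F i,
        trivIset [set: 'I_r] F &
        forall i j, mu i (F j) <= mu i (F i)].

(* By Sierpinski's theorem (a non-atomic finite measure takes every value in
   [0, mu A] on subsets of A), S splits into 2^(r-1) disjoint pieces of equal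
   mu_k-measure.  The agents other than k are served one after the other.  To
   serve an agent a followed by j further agents, let m = 2^j and let v be the
   m-th largest mu_a-value of a piece: cut every piece down to mu_a-value at most
   v (fewer than m pieces get cut), and serve the j other agents recursively on
   the cut pieces, which uses fewer than m of them.  At least m pieces have
   mu_a-value v after cutting, so one of them is unused and a takes it.  Then
   no served agent prefers another agent's share, or an unused piece, to its
   own, and fewer than 2^(r-1) pieces are used or cut; hence a whole piece of
   mu_k-measure mu_k(S) / 2^(r-1) remains for agent k. *)

From HB Require Import structures.
From mathcomp Require Import all_boot all_order all_algebra.
From mathcomp Require Import all_classical all_reals all_analysis.
From mathcomp Require Import lra.
Import Order.TTheory GRing.Theory Num.Theory.
Set Implicit Arguments. Unset Strict Implicit. Unset Printing Implicit Defensive.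
Local Open Scope classical_set_scope.
Local Open Scope ring_scope.

Definition measureR d (T : measurableType d) (R : realType)
  (mu : set T -> \bar R) (A : set T) : R := fine (mu A).

Section finite_measure_real.
Context d (T : measurableType d) (R : realType).
Variable mu : {finite_measure set T -> \bar R}.

Lemma measureRE A : measurable A -> mu A = (measureR mu A)%:E.
Proof. by move=> mA; rewrite fineK //; exact: fin_num_measure. Qed.

Lemma measureR_ge0 A : 0 <= measureR mu A.
Proof. by rewrite fine_ge0 // measure_ge0. Qed.

Lemma measureR0 : measureR mu set0 = 0.
Proof. by rewrite /measureR measure0. Qed.

Lemma measureRU A B : measurable A -> measurable B -> A `&` B = set0 ->
  measureR mu (A `|` B) = measureR mu A + measureR mu B.
Proof.
move=> mA mB AB0; apply/EFin_inj; rewrite -measureRE; last exact: measurableU.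
by rewrite measureU // EFinD -!measureRE.
Qed.

Lemma le_measureR A B : measurable A -> measurable B -> A `<=` B ->
  measureR mu A <= measureR mu B.
Proof.
move=> mA mB AB; rewrite -lee_fin -!measureRE //.
by apply: le_measure; rewrite ?inE.
Qed.

Lemma measureRD A B : measurable A -> measurable B -> B `<=` A ->
  measureR mu (A `\` B) = measureR mu A - measureR mu B.
Proof.
move=> mA mB BA.
rewrite -[in measureR mu A](setDUK BA) setUC measureRU ?addrK //.
- exact: measurableD.
- by rewrite setDE -setIA setICl setI0.
Qed.

Lemma exists_half_maximal_subset A e : measurable A -> 0 <= e ->
  exists C, [/\ measurable C, C `<=` A, measureR mu C <= e &
    forall D, measurable D -> D `<=` A -> measureR mu D <= e ->
      measureR mu D <= 2 * measureR mu C].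
Proof.
move=> mA e_ge0.
pose E := [set measureR mu D | D in
  [set D | [/\ measurable D, D `<=` A & measureR mu D <= e]]].
have E_sup : has_sup E.
  split; first by exists 0, set0; rewrite ?measureR0 //; split; rewrite ?measureR0.
  by exists (measureR mu A) => _ [D [mD DA _] <-]; exact: le_measureR.
have E_ub D : measurable D -> D `<=` A -> measureR mu D <= e ->
    measureR mu D <= sup E.
  by move=> mD DA De; apply: sup_upper_bound => //; exists D.
have [sup_le0|sup_gt0] := leP (sup E) 0.
  exists set0; split; rewrite ?measureR0 ?mulr0 // => D mD DA De.
  exact: le_trans (E_ub D mD DA De) sup_le0.
have [_ [C [mC CA Ce] <-] C_gt] :=
  sup_adherent (divr_gt0 sup_gt0 (ltr0Sn R 1)) E_sup.
by exists C; split => // D mD DA De; have := E_ub D mD DA De; lra.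
Qed.

End finite_measure_real.

Section non_atomic_measure.
Context d (T : measurableType d) (R : realType).
Variable mu : {finite_measure set T -> \bar R}.
Hypothesis mu_na : non_atomic mu.

Lemma non_atomic_half A : measurable A -> 0 < measureR mu A ->
  exists C, [/\ measurable C, C `<=` A, 0 < measureR mu C &
    2 * measureR mu C <= measureR mu A].
Proof.
move=> mA A_gt0.
have [|B [mB BA B_gt0 B_lt]] := mu_na mA; first by rewrite measureRE // lte_fin.
rewrite !measureRE // !lte_fin in B_gt0 B_lt.
have ABD := measureRD mu mA mB BA.
have [B_half|B_big] := leP (2 * measureR mu B) (measureR mu A).
  by exists B.
exists (A `\` B); split => //; first exact: measurableD.
  by rewrite ABD subr_gt0.
by rewrite ABD; lra.
Qed.

Lemma non_atomic_small A e : measurable A -> 0 < measureR mu A -> 0 < e ->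
  exists C, [/\ measurable C, C `<=` A, 0 < measureR mu C & measureR mu C < e].
Proof.
move=> mA A_gt0 e_gt0.
have halving n : exists C, [/\ measurable C, C `<=` A, 0 < measureR mu C &
    measureR mu C * 2 ^+ n <= measureR mu A].
  elim: n => [|n [C [mC CA C_gt0 Cn]]].
    by exists A; rewrite expr0 mulr1; split.
  have [B [mB BC B_gt0 B_half]] := non_atomic_half mC C_gt0.
  exists B; split => //; first exact: subset_trans CA.
  by apply: le_trans Cn; rewrite exprS mulrA ler_pM2r ?exprn_gt0 // mulrC.
have := archi_boundP (divr_ge0 (measureR_ge0 mu A) (ltW e_gt0)).
set n := Num.bound _ => A_lt.
have [C [mC CA C_gt0 Cn]] := halving n.
exists C; split => //.
have n_le : n%:R <= 2 ^+ n :> R by rewrite -natrX ler_nat ltnW // ltn_expl.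
rewrite ltr_pdivrMr // in A_lt.
have : measureR mu C * 2 ^+ n < e * 2 ^+ n.
  by apply: le_lt_trans Cn (lt_le_trans A_lt _); rewrite [leRHS]mulrC ler_pM2r.
by rewrite ltr_pM2r ?exprn_gt0.
Qed.

(* Greedy exhaustion: each step adds at least half of the largest admissible
   subset of what is left.  If the union fell short of t, a small subset of
   positive measure of the rest would stay admissible at every step, so the
   steps would have measure bounded below and the union unbounded measure. *)
Lemma sierpinski A t : measurable A -> 0 <= t <= measureR mu A ->
  exists B, [/\ measurable B, B `<=` A & measureR mu B = t].
Proof.
move=> mA /andP[t_ge0 t_le].
pose good B := [/\ measurable B, B `<=` A & measureR mu B <= t].
have step B : exists C, good B -> [/\ measurable C, C `<=` A `\` B,
    measureR mu B + measureR mu C <= t &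
    forall D, measurable D -> D `<=` A `\` B ->
      measureR mu B + measureR mu D <= t -> measureR mu D <= 2 * measureR mu C].
  have [[mB BA Bt]|not_good] := pselect (good B); last by exists set0.
  have [|C [mC CAB Ct Cmax]] := exists_half_maximal_subset mu (measurableD mA mB)
    (e := t - measureR mu B); first by rewrite subr_ge0.
  exists C => _; split => // [|D mD DAB BDt]; first by lra.
  by apply: Cmax => //; lra.
have [f fP] := choice step.
have f_disj B : good B -> B `&` f B = set0.
  by case/fP => _ fBA _ _; rewrite -subset0 => x [xB /fBA[]].
pose B n := iter n (fun B => B `|` f B) set0.
have goodB n : good (B n).
  elim: n => [|n gBn].
    by split; [exact: measurable0 | move=> x | rewrite /= measureR0].
  have [[mBn BnA _] [mC CAB Ct _]] := (gBn, fP _ gBn).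
  split => /=; [exact: measurableU | by move=> x [/BnA|/CAB[]] |].
  by rewrite measureRU ?f_disj.
have mB n : measurable (B n) by case: (goodB n).
have measureRS n : measureR mu (B n.+1) = measureR mu (B n) + measureR mu (f (B n)).
  by have [mC _ _ _] := fP _ (goodB n); rewrite measureRU ?f_disj.
pose Binf := \bigcup_n B n.
have mBinf : measurable Binf by exact: bigcupT_measurable.
have BBinf n : B n `<=` Binf by move=> x Bx; exists n.
have BinfA : Binf `<=` A by move=> x [n _]; case: (goodB n) => _ + _; apply.
have Binf_le : measureR mu Binf <= t.
  have ndB : nondecreasing_seq B.
    by apply/nondecreasing_seqP => n; apply/subsetPset => x Bx; left.
  rewrite -lee_fin -measureRE //.
  apply: cvge_to_le (nondecreasing_cvg_mu mB mBinf ndB) _.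
  by apply: nearW => n /=; rewrite measureRE // lee_fin; case: (goodB n).
exists Binf; split => //; apply/eqP; rewrite eq_le Binf_le leNgt.
apply/negP => Binf_lt.
have rest_gt0 : 0 < measureR mu (A `\` Binf).
  by rewrite measureRD // subr_gt0 (lt_le_trans Binf_lt).
have gap_gt0 : 0 < t - measureR mu Binf by rewrite subr_gt0.
have [D [mD DA D_gt0 D_lt]] :=
  non_atomic_small (measurableD mA mBinf) rest_gt0 gap_gt0.
have D_le n : measureR mu D <= 2 * measureR mu (f (B n)).
  have [_ _ _ fmax] := fP _ (goodB n); apply: fmax => //.
    by move=> x /DA[xA xnB]; split => // /BBinf.
  by have := le_measureR mu (mB n) mBinf (BBinf n); lra.
have lin n : n%:R * measureR mu D <= 2 * measureR mu (B n).
  elim: n => [|n IH]; first by rewrite mul0r measureR0 mulr0.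
  by rewrite measureRS -addn1 natrD; have := D_le n; lra.
have := archi_boundP (divr_ge0 (mulr_ge0 (ler0n R 2) t_ge0) (ltW D_gt0)).
set m := Num.bound _; rewrite ltr_pdivrMr // => m_big.
by have := lin m; case: (goodB m) => _ _; lra.
Qed.

Lemma disjoint_subsets_of_measure n A c : measurable A -> 0 <= c ->
  n%:R * c <= measureR mu A ->
  exists Q : nat -> set T, [/\ forall b, measurable (Q b),
    forall b, Q b `<=` A, forall b, (b < n)%N -> measureR mu (Q b) = c &
    trivIset setT Q].
Proof.
elim: n A => [|n IH] A mA c_ge0 nc_le.
  exists (fun=> set0); split => //; last exact: trivIset_set0.
  by move=> _; exact: sub0set.
rewrite -addn1 natrD mulrDl mul1r in nc_le.
have [|Q0 [mQ0 Q0A Q0c]] := sierpinski mA (t := c).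
  by rewrite c_ge0 /=; have := mulr_ge0 (ler0n R n) c_ge0; lra.
have [|Q [mQ QA Qc tQ]] := IH (A `\` Q0) (measurableD mA mQ0) c_ge0.
  by rewrite measureRD // Q0c; lra.
exists (fun b => if b is b'.+1 then Q b' else Q0); split.
- by case.
- by case=> [|b] //= x /QA[].
- by case.
- apply/trivIsetP => -[|i] [|j] _ _ //= ij.
  + by rewrite -subset0 => x [Q0x /QA[]].
  + by rewrite -subset0 => x [/QA[_ + Q0x]].
  + by move/trivIsetP : tQ; apply.
Qed.

Lemma measure_equipartition n A : measurable A ->
  exists Q : 'I_n -> set T, [/\ forall b, measurable (Q b),
    forall b, Q b `<=` A, forall b, measureR mu (Q b) = measureR mu A / n%:R &
    trivIset setT Q].
Proof.
case: n => [|n] mA; first by exists (fun=> set0); split; case.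
have [||Q [mQ QA Qc tQ]] :=
  disjoint_subsets_of_measure (n := n.+1) (c := measureR mu A / n.+1%:R) mA.
- by rewrite divr_ge0 ?measureR_ge0.
- by rewrite mulrC divfK.
exists (fun b => Q b); split => // [b|i j _ _]; first exact: Qc.
by move/(tQ _ _ Logic.I Logic.I)/val_inj.
Qed.

End non_atomic_measure.

Section trimming.
Context d (T : measurableType d) (R : realType).

Definition trimmed (nu : set T -> \bar R) (v : R) (A C : set T) :=
  [/\ measurable C, C `<=` A, measureR nu C = Num.min (measureR nu A) v &
    (measureR nu A <= v -> C = A)].

Lemma trimmed_refl nu v A : measurable A -> measureR nu A <= v ->
  trimmed nu v A A.
Proof. by move=> mA Av; split => //; rewrite min_l. Qed.

Lemma exists_trimmed (nu : {finite_measure set T -> \bar R}) v A :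
  non_atomic nu -> 0 <= v -> measurable A -> exists C, trimmed nu v A C.
Proof.
move=> nu_na v_ge0 mA.
have [Av|vA] := leP (measureR nu A) v; first by exists A; exact: trimmed_refl.
have [|C [mC CA Cv]] := sierpinski nu_na mA (t := v); first by rewrite v_ge0 ltW.
exists C; split => // [|Av]; first by rewrite Cv min_r ?ltW.
by have := lt_le_trans vA Av; rewrite ltxx.
Qed.

End trimming.

Section threshold.
Context {disp : Order.disp_t} {T : orderType disp} {I : finType} (w : I -> T).
Local Open Scope set_scope.
Local Open Scope order_scope.

Lemma exists_threshold m : (0 < m <= #|I|)%N ->
  exists b, (#|[set c | (w b < w c)%O]| < m <= #|[set c | (w b <= w c)%O]|)%N.
Proof.
case/andP=> m_gt0 m_le; have /card_gt0P[i0 _] := leq_trans m_gt0 m_le.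
pose P b := (m <= #|[set c | (w b <= w c)%O]|)%N.
have [b0 _ b0_min] := @arg_minP _ _ I i0 xpredT w isT.
have Pb0 : P b0.
  rewrite /P (_ : [set c | _] = [set: I]) ?cardsT //.
  by apply/setP => c; rewrite !inE b0_min.
have [b Pb b_max] := @arg_maxP _ _ I b0 P w Pb0.
exists b; rewrite [X in _ && X]Pb andbT ltnNge; apply/negP => Pgt.
have /card_gt0P[c0] := leq_trans m_gt0 Pgt; rewrite inE => bc0.
have [c bc c_min] := @arg_minP _ _ I c0 (fun c => w b < w c) w bc0.
suff Pc : P c by have := b_max c Pc; rewrite /= leNgt bc.
rewrite /P (_ : [set x | _] = [set x | w b < w x]) //.
by apply/setP => x; rewrite !inE; apply/idP/idP => [/(lt_le_trans bc)|/c_min].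
Qed.
End threshold.

Section envy_free_selection.
Context d (T : measurableType d) (R : realType) (I : eqType) (J : finType).
Variable mu : I -> {finite_measure set T -> \bar R}.
Local Open Scope set_scope.

Definition envy_free_selection (s : seq I) (Q : J -> set T) (U : {set J})
    (p : I -> J) (X : I -> set T) :=
  [/\ {in s, forall i, [/\ p i \in U, measurable (X i) & X i `<=` Q (p i)]},
      {in s &, injective p},
      {in s &, forall i j, measureR (mu i) (X j) <= measureR (mu i) (X i)} &
      {in s, forall i b, b \notin U ->
        measureR (mu i) (Q b) <= measureR (mu i) (X i)}].

Lemma envy_free_selection_cons a s Q Q' (U : {set J}) p X v t :
  a \notin s -> (forall b, trimmed (mu a) v (Q b) (Q' b)) ->
  v <= measureR (mu a) (Q t) -> t \notin U -> envy_free_selection s Q' U p X ->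
  envy_free_selection (a :: s) Q
    (t |: (U :|: [set b | v < measureR (mu a) (Q b)]))
    (fun i => if i == a then t else p i) (fun i => if i == a then Q' t else X i).
Proof.
move=> a_s trim vt tU [pX p_inj envy unused].
have Q't : measureR (mu a) (Q' t) = v by case: (trim t) => _ _ -> _; rewrite min_r.
have Q'_le b : measureR (mu a) (Q' b) <= v.
  by case: (trim b) => _ _ -> _; rewrite ge_min lexx orbT.
have ne_a i : i \in s -> (i == a) = false.
  by move=> iS; apply: contraNF a_s => /eqP <-.
split.
- move=> i; rewrite inE => /predU1P[->|iS]; rewrite ?eqxx ?ne_a //.
    by rewrite !inE eqxx; case: (trim t).
  have [pU mX XQ'] := pX i iS; rewrite !inE pU orbT; split => //.
  by apply: subset_trans XQ' _; case: (trim (p i)).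
- move=> i j; rewrite !inE => /predU1P[->|iS] /predU1P[->|jS];
    rewrite ?eqxx ?ne_a //; last exact: p_inj.
  + by move=> tpj; case/negP: tU; rewrite tpj; case: (pX j jS).
  + by move=> pit; case/negP: tU; rewrite -pit; case: (pX i iS).
- move=> i j; rewrite !inE => /predU1P[->|iS] /predU1P[->|jS];
    rewrite ?eqxx ?ne_a //; last exact: envy.
  + rewrite Q't; have [_ mX XQ'] := pX j jS; apply: le_trans (Q'_le (p j)).
    by apply: le_measureR => //; case: (trim (p j)).
  + exact: unused.
- move=> i; rewrite inE => /predU1P[->|iS] b; rewrite !inE !negb_or -leNgt.
    by rewrite eqxx Q't => /and3P[_ _ ->].
  case/and3P=> _ bU Qbv; rewrite ne_a //.
  by case: (trim b) => _ _ _ /(_ Qbv) <-; exact: unused.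
Qed.

Lemma envy_free_selection_cons_equal a s Q (U : {set J}) p X c : a \notin s ->
  (forall b, measurable (Q b)) -> (forall b, measureR (mu a) (Q b) = c) ->
  (#|U| < #|J|)%N -> envy_free_selection s Q U p X ->
  exists U' p' X',
    envy_free_selection (a :: s) Q U' p' X' /\ measureR (mu a) (X' a) = c.
Proof.
move=> a_s mQ Qc U_lt sel.
have /subsetPn[t _ tU] : ~~ ([set: J] \subset U).
  by apply/negP => /subset_leq_card; rewrite cardsT leqNgt U_lt.
have trim b : trimmed (mu a) c (Q b) (Q b) by apply: trimmed_refl; rewrite ?Qc.
have ct : c <= measureR (mu a) (Q t) by rewrite Qc.
eexists _, _, _; split; first exact: envy_free_selection_cons a_s trim ct tU sel.
by rewrite /= eqxx.
Qed.

Hypothesis mu_na : forall i, non_atomic (mu i).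

Lemma exists_envy_free_selection s Q : uniq s -> (forall b, measurable (Q b)) ->
  (2 ^ size s <= #|J|)%N ->
  exists (U : {set J}) (p : I -> J) (X : I -> set T),
    (#|U| < 2 ^ size s)%N /\ envy_free_selection s Q U p X.
Proof.
elim: s Q => [|a s IH] Q /= uniq_s mQ s_le.
  have /card_gt0P[j0 _] := s_le.
  by exists finset.set0, (fun=> j0), (fun=> set0); rewrite cards0.
case/andP: uniq_s => a_s uniq_s.
set m := (2 ^ size s)%N in IH s_le *.
have m_le : (m <= #|J|)%N by apply: leq_trans s_le; rewrite expnS leq_pmull.
pose w b := measureR (mu a) (Q b).
have [|b /andP[above_lt above_ge]] := exists_threshold w (m := m).
  by rewrite expn_gt0 m_le.
have [Q' trim] :=
  choice (fun c => exists_trimmed (@mu_na a) (measureR_ge0 (mu a) (Q b)) (mQ c)).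
have mQ' c : measurable (Q' c) by case: (trim c).
have [U [p [X [U_lt sel]]]] := IH Q' uniq_s mQ' m_le.
have /subsetPn[t] : ~~ ([set c | w b <= w c] \subset U).
  apply/negP => /subset_leq_card above_le.
  by have := leq_ltn_trans (leq_trans above_ge above_le) U_lt; rewrite ltnn.
rewrite inE => bt tU.
exists (t |: (U :|: [set c | w b < w c])), (fun i => if i == a then t else p i),
  (fun i => if i == a then Q' t else X i); split; last first.
  exact: envy_free_selection_cons.
rewrite cardsU1 expnS -/m mul2n -addnn.
apply: leq_ltn_trans (leq_add (leq_b1 _) (leq_card_setU _ _).1) _.
by rewrite add1n -addSn -addnS; exact: leq_add U_lt above_lt.
Qed.

End envy_free_selection.

Lemma strong_solution_of_selection d (T : measurableType d) (R : realType)
    (r : nat) (J : finType) (mu : 'I_r -> {finite_measure set T -> \bar R})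
    s (Q : J -> set T) U p X :
  (forall i, i \in s) -> trivIset setT Q -> envy_free_selection mu s Q U p X ->
  strong_solution (fun i => (mu i : set T -> \bar R))
    (\bigcup_(i in [set: 'I_r]) X i).
Proof.
move=> s_all tQ [pX p_inj envy _].
have {}pX i := pX i (s_all i).
exists X; split => // [i|i j _ _ [x [Xix Xjx]]|i j].
- by case: (pX i).
- apply: p_inj; rewrite ?s_all //; apply: tQ => //; exists x.
  by case: (pX i) (pX j) => _ _ XQi [_ _ XQj]; split; [exact: XQi | exact: XQj].
- have [[_ mXi _] [_ mXj _]] := (pX i, pX j).
  by rewrite !measureRE // lee_fin envy ?s_all.
Qed.

Local Open Scope ereal_scope.

Theorem lemma3 (d : measure_display) (T : measurableType d) (R : realType)
  (r : nat) (hr : (1 <= r)%N)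
  (mu : 'I_r -> {finite_measure set T -> \bar R})
  (hna : forall i, non_atomic (mu i))
  (S : set T) (mS : measurable S) (k : 'I_r) :
  exists H : set T,
    [/\ measurable H, H `<=` S,
        (((2 : R) ^- (r - 1)%N)%:E * mu k S <= mu k H) &
        strong_solution (fun i => (mu i : set T -> \bar R)) H].
Proof.
pose L := (2 ^ (r - 1))%N.
have [Q [mQ QS Qc tQ]] := measure_equipartition (hna k) L mS.
pose s := enum [set~ k]%SET.
have size_s : size s = (r - 1)%N by rewrite -cardE cardsC1 card_ord subn1.
have [|U [p [X [U_lt sel]]]] :=
  exists_envy_free_selection hna (enum_uniq _) mQ (s := s).
  by rewrite card_ord size_s.
have [||U' [P [F [selF Fk]]]] := envy_free_selection_cons_equal _ mQ Qc _ sel.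
- by rewrite mem_enum !inE eqxx.
- by move: U_lt; rewrite size_s card_ord.
have s_all i : i \in k :: s by rewrite inE mem_enum !inE orbN.
have [FQ _ _ _] := selF; have {}FQ i := FQ i (s_all i).
have mH : measurable (\bigcup_(i in [set: 'I_r]) F i).
  by apply: fin_bigcup_measurable => [|i _]; [exact: finite_finset | case: (FQ i)].
exists (\bigcup_(i in [set: 'I_r]) F i); split => //.
- by move=> x [i _ Fix]; case: (FQ i) => _ _ /(_ x Fix); exact: QS.
- have [_ mFk _] := FQ k; apply: (@le_trans _ _ (mu k (F k))).
    by rewrite (measureRE _ mFk) Fk (measureRE _ mS) -EFinM lee_fin /L natrX mulrC.
  by apply: le_measure; rewrite ?inE // => x Fx; exists k.
- exact: strong_solution_of_selection s_all tQ selF.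
Qed.
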